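(* Consider $\beta=0$ and let $h_c^H:=-H'(0)$. For every $\varepsilon>0$ and every $h\ne h_c^H$, \[ Z^\Psi_{N,h}\ \sim\ Z^{\Psi,\varepsilon}_{N,h}:=\sum_{m\in\{1,\dots,N\}:\,|m/N-\rho_h|\le\varepsilon}e^{hm}\Psi(m,N)\,\mathbf P(\tau_m=N)\qquad(N\to\infty). \]
   Context: Let $\tau=(\tau_j)_{j\ge0}$ be a renewal process with $\tau_0=0$ and i.i.d. increments with values in $\mathbb N$, law $\mathbf P$; $K(n)=\mathbf P(\tau_1=n)>0$ for all $n$, $K(n)\sim C_Kn^{-(1+\alpha)}$, $\alpha>0$, $C_K>0$. Set $\delta_n=\mathbf 1_{n\in\{\tau_0,\tau_1,\dots\}}$. Let $\Psi(m,N)=Q(m,N)\exp(NH(m/N))$ ($N\in\mathbb N$, $1\le m\le N$) where: $H:[0,1]\to\mathbb R\cup\{-\infty\}$ is concave, real analytic in $(0,1)$, continuous on $[0,1]$ (possibly $H(0)$ and/or $H(1)$ equal $-\infty$); $Q\ge0$; for every $b>0$ there is $c>0$ with $Q(m,N)\le ce^{bN}$ for all $m\le N$; for all $0<u<v<1$, $b>0$ there is $c>0$ with $Q(m,N)\ge ce^{-bN}$ whenever $m/N\in[u,v]$. $H'(0):=\lim_{x\searrow0}H'(x)$. $Z^\Psi_{N,h}=\mathbf E[\exp(h\sum_{j=1}^N\delta_j)\Psi(\sum_{j=1}^N\delta_j,N)\delta_N]=\sum_{m=1}^Ne^{hm}\Psi(m,N)\mathbf P(\tau_m=N)$, $\textsc{f}_H(h)=\lim_N\frac1N\log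 Z^\Psi_{N,h}$ (exists), $\textsc{g}(\rho)=\lim_{N\to\infty,m/N\to\rho}\frac1N\log\mathbf P(\tau_m=N)$ (exists), and $\rho_h:=\textsc{f}_H'(h)$, which for $h\ne h_c^H$ is the unique maximizer over $[0,1]$ of $\rho\mapsto h\rho+H(\rho)+\textsc{g}(\rho)$. *)

From HB Require Import structures.
From mathcomp Require Import all_boot all_order all_algebra.
From mathcomp Require Import all_classical all_reals all_analysis.
Set Implicit Arguments. Unset Strict Implicit. Unset Printing Implicit Defensive.
Import Order.TTheory GRing.Theory Num.Theory.
Import numFieldNormedType.Exports.
Local Open Scope classical_set_scope.
Local Open Scope ring_scope.

(* P(tau_m = N) for the renewal process whose i.i.d. increments have law
   K : nat -> R (K n = P(tau_1 = n)): the m-fold convolution power of K at N. *)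
Fixpoint renewal_prob (R : realType) (K : nat -> R) (m N : nat) : R :=
  match m with
  | 0 => (N == 0%N)%:R
  | m'.+1 => \sum_(k < N.+1) K k * renewal_prob K m' (N - k)
  end.

Definition expNE (R : realType) (N : nat) (x : \bar R) : R :=
  match x with
  | r%:E => expR (N%:R * r)
  | -oo%E => 0
  | +oo%E => 0 (* never used: H does not take the value +oo *)
  end.

Definition Psi (R : realType) (Q : nat -> nat -> R) (H : R -> \bar R)
  (m N : nat) : R :=
  Q m N * expNE N (H (m%:R / N%:R)).

Definition ZPsi (R : realType) (K : nat -> R) (Q : nat -> nat -> R)
  (H : R -> \bar R) (h : R) (N : nat) : R :=
  \sum_(1 <= m < N.+1) expR (h * m%:R) * Psi Q H m N * renewal_prob K m N.

Definition ZPsi_eps (R : realType) (K : nat -> R) (Q : nat -> nat -> R)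
  (H : R -> \bar R) (h rho eps : R) (N : nat) : R :=
  \sum_(1 <= m < N.+1 | `|m%:R / N%:R - rho| <= eps)
     expR (h * m%:R) * Psi Q H m N * renewal_prob K m N.

Definition real_analytic_on (R : realType) (A : set R) (f : R -> R) : Prop :=
  forall x0, A x0 -> exists r : R, 0 < r /\ exists a : nat -> R,
    forall x, `|x - x0| < r ->
      (fun n => \sum_(k < n) a k * (x - x0) ^+ k) @ \oo --> f x.

(* With w_N(m) = Psi(m,N) P(tau_m = N) >= 0, Z_N(x) = sum_m e^(x m) w_N(m) is a
   tilted sum and (1/N) log Z_N -> f_H.  Chernoff: the terms with
   m/N > rho + eps are at most e^(-d (rho + eps) N) Z_N(h + d), and those with
   m/N < rho - eps at most e^(-d (eps - rho) N) Z_N(h - d).  As f_H'(h) = rho,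
   for small d > 0 both exponential rates fall below that of Z_N(h) by
   d eps / 4, so the window carries all but an exponentially small fraction of
   Z_N(h). *)
From HB Require Import structures.
From mathcomp Require Import all_boot all_order all_algebra.
From mathcomp Require Import all_classical all_reals all_analysis.
From mathcomp Require Import lra zify.
Set Implicit Arguments. Unset Strict Implicit. Unset Printing Implicit Defensive.
Import Order.TTheory GRing.Theory Num.Theory.
Import numFieldNormedType.Exports.
Local Open Scope classical_set_scope.
Local Open Scope ring_scope.

Lemma psumr_gt0 (R : numDomainType) (I : eqType) (r : seq I) (P : pred I)
    (F : I -> R) i :
  (forall i, P i -> 0 <= F i) -> i \in r -> P i -> 0 < F i ->
  0 < \sum_(i <- r | P i) F i.
Proof.
move=> F_ge0 ir Pi Fi_gt0; rewrite lt_def psumr_neq0 // sumr_ge0 // andbT.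
by apply/hasP; exists i; rewrite ?Pi.
Qed.

Lemma half_ratio_bounds (F : realFieldType) N : (2 <= N)%N ->
  1 / 4 <= (N./2)%:R / (N%:R : F) <= 3 / 4.
Proof.
move=> N2; have N0 : (0 : F) < N%:R by rewrite ltr0n; lia.
have lo : (N <= 4 * N./2)%N by lia.
have hi : (4 * N./2 <= 3 * N)%N by lia.
rewrite ler_pdivlMr // ler_pdivrMr //.
move: lo hi; rewrite -!(ler_nat F) !natrM => lo hi.
apply/andP; split; lra.
Qed.

Section ExponentialBounds.
Variable R : realType.

Lemma is_derive_secant_lt (f : R -> R) (x rho e : R) : is_derive x 1 f rho -> 0 < e ->
  exists2 d, 0 < d & f (x + d) - f x < d * (rho + e) /\ f (x - d) - f x < d * (e - rho).
Proof.
move=> [/cvgrPdist_lt/(_ e) quotient_cvg <-] e0.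
have /nbhs_ballP[r /= r0 quotient_near] := quotient_cvg e0.
have secant_close t : `|t| < r -> t != 0 ->
    `|'D_1 f x - (f (x + t) - f x) / t| < e.
  move=> tr t0; move: (quotient_near t); rewrite /ball /= sub0r normrN.
  by move=> /(_ tr t0); rewrite -[t%:A]/(t * 1) mulr1 (addrC t) [_ / t]mulrC.
pose d := r / 2; have d0 : 0 < d by rewrite /d; lra.
have d_neq0 : d != 0 by rewrite gt_eqF.
have d_lt_r : `|d| < r by rewrite gtr0_norm // /d; lra.
have secant_eq t : t != 0 -> f (x + t) - f x = t * ((f (x + t) - f x) / t).
  by move=> t0; rewrite mulrC divfK.
exists d => //; rewrite (secant_eq d) // (secant_eq (- d)) ?oppr_eq0 //.
have := secant_close d d_lt_r d_neq0.
have := secant_close (- d) ltac:(by rewrite normrN) ltac:(by rewrite oppr_eq0).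
by rewrite !ltr_norml => /andP[? ?] /andP[? ?]; split; nra.
Qed.

Lemma ln_rate_expR_bounds (u : nat -> R) l eta :
  (fun N => ln (u N) / N%:R) @ \oo --> l -> 0 < eta ->
  \forall N \near \oo,
    0 < u N -> expR (N%:R * (l - eta)) <= u N <= expR (N%:R * (l + eta)).
Proof.
move=> /cvgrPdist_lt/(_ eta) rate_near eta0; near=> N => uN0.
have N0 : (0 : R) < N%:R by rewrite ltr0n; near: N; exists 1%N.
rewrite -[u N]lnK ?posrE // !ler_expR.
have -> : ln (u N) = N%:R * (ln (u N) / N%:R) by rewrite mulrC divfK ?gt_eqF.
have : `|l - ln (u N) / N%:R| < eta by near: N; exact: rate_near.
by rewrite !ler_pM2l // ltr_norml => /andP[lo hi]; apply/andP; split; lra.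
Unshelve. all: end_near.
Qed.

Lemma expR_rate_shift_le (n c g eta l l' Z Z' : R) : 0 < n ->
  Z' <= expR (n * (l' + eta)) -> expR (n * (l - eta)) <= Z ->
  l' - l <= c - g - 2 * eta ->
  expR (- (c * n)) * Z' <= expR (- (g * n)) * Z.
Proof.
move=> n0 Z'_le Z_ge rate_gap.
apply: (le_trans (ler_wpM2l (expR_ge0 _) Z'_le)).
apply: (le_trans _ (ler_wpM2l (expR_ge0 _) Z_ge)).
rewrite -!expRD ler_expR.
have : n * (l' - l - (c - g - 2 * eta)) <= 0 by rewrite pmulr_rle0 // subr_le0.
lra.
Qed.

Lemma expR_le_tilted_pair (x d rho eps n y : R) : 0 < d -> 0 < n ->
  eps < `|y / n - rho| ->
  expR (x * y) <= expR (- (d * (rho + eps) * n)) * expR ((x + d) * y)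
                + expR (- (d * (eps - rho) * n)) * expR ((x - d) * y).
Proof.
move=> d0 n0; rewrite ltr_normr => /orP[above|below]; rewrite -!expRD.
- have : (rho + eps) * n < y by rewrite -ltr_pdivlMr //; lra.
  by move=> y_gt; rewrite ler_wpDr ?expR_ge0 // ler_expR; nra.
- have : y < (rho - eps) * n by rewrite -ltr_pdivrMr //; lra.
  by move=> y_lt; rewrite ler_wpDl ?expR_ge0 // ler_expR; nra.
Qed.

End ExponentialBounds.

Section TiltedSums.
Variables (R : realType) (w : nat -> nat -> R).

Definition tilted_sum (x : R) (N : nat) : R :=
  \sum_(1 <= m < N.+1) expR (x * m%:R) * w m N.

Definition tilted_sum_window (x rho eps : R) (N : nat) : R :=
  \sum_(1 <= m < N.+1 | `|m%:R / N%:R - rho| <= eps) expR (x * m%:R) * w m N.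

Hypothesis w_ge0 : forall m N, 0 <= w m N.

Lemma tilted_sum_gt0 x N m : (1 <= m <= N)%N -> 0 < w m N -> 0 < tilted_sum x N.
Proof.
move=> mN wm_gt0; apply: (psumr_gt0 (i := m)) => [k _||//|].
- by rewrite mulr_ge0 ?expR_ge0.
- by rewrite mem_index_iota ltnS.
- by rewrite mulr_gt0 ?expR_gt0.
Qed.

Lemma tilted_sum_window_le x rho eps N :
  tilted_sum_window x rho eps N <= tilted_sum x N.
Proof.
rewrite /tilted_sum (bigID (fun m : nat => `|m%:R / N%:R - rho| <= eps)) /= lerDl.
by apply: sumr_ge0 => m _; rewrite mulr_ge0 ?expR_ge0.
Qed.

Lemma tilted_sum_tail_le x d rho eps N : 0 < d -> (0 < N)%N ->
  tilted_sum x N - tilted_sum_window x rho eps N <=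
    expR (- (d * (rho + eps) * N%:R)) * tilted_sum (x + d) N
    + expR (- (d * (eps - rho) * N%:R)) * tilted_sum (x - d) N.
Proof.
move=> d0 N0; set inside := fun m : nat => `|m%:R / N%:R - rho| <= eps.
rewrite /tilted_sum (bigID inside) /= addrAC subrr add0r !mulr_sumr -big_split /=.
rewrite [leRHS](bigID inside) /= -[leLHS]add0r lerD //.
  by apply: sumr_ge0 => m _; rewrite addr_ge0 // !mulr_ge0 ?expR_ge0.
apply: ler_sum => m; rewrite -ltNge => outside.
rewrite !mulrA -mulrDl ler_wpM2r //; apply: expR_le_tilted_pair => //.
by rewrite ltr0n.
Qed.

Theorem tilted_sum_window_ratio_cvg (f : R -> R) (x rho eps : R) :
  (\forall N \near \oo, forall y, 0 < tilted_sum y N) ->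
  (forall y, (fun N => ln (tilted_sum y N) / N%:R) @ \oo --> f y) ->
  is_derive x 1 f rho -> 0 < eps ->
  (fun N => tilted_sum_window x rho eps N / tilted_sum x N) @ \oo --> (1 : R).
Proof.
move=> Z_gt0 Z_rate fx eps0.
have [d d0 [f_right f_left]] := is_derive_secant_lt fx (divr_gt0 eps0 (ltr0n _ 2)).
pose g := d * eps / 4; pose eta := d * eps / 8.
have g0 : 0 < g by rewrite /g; nra.
have eta0 : 0 < eta by rewrite /eta; nra.
have rate y := ln_rate_expR_bounds (Z_rate y) eta0.
have ratio_bounds : \forall N \near \oo,
    1 - 2 * expR (- g) ^+ N <= tilted_sum_window x rho eps N / tilted_sum x N <= 1.
  near=> N.
  have N0 : (0 < N)%N by near: N; exists 1%N.
  have N0r : (0 : R) < N%:R by rewrite ltr0n.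
  have Z_pos : forall y, 0 < tilted_sum y N by near: N.
  have /andP[Z_lo _] : expR (N%:R * (f x - eta)) <= tilted_sum x N
      <= expR (N%:R * (f x + eta)).
    by move: (Z_pos x); near: N; exact: rate.
  have /andP[_ Zr_hi] : expR (N%:R * (f (x + d) - eta)) <= tilted_sum (x + d) N
      <= expR (N%:R * (f (x + d) + eta)).
    by move: (Z_pos (x + d)); near: N; exact: rate.
  have /andP[_ Zl_hi] : expR (N%:R * (f (x - d) - eta)) <= tilted_sum (x - d) N
      <= expR (N%:R * (f (x - d) + eta)).
    by move: (Z_pos (x - d)); near: N; exact: rate.
  have right_le : expR (- (d * (rho + eps) * N%:R)) * tilted_sum (x + d) N
      <= expR (- (g * N%:R)) * tilted_sum x N.
    by apply: expR_rate_shift_le N0r Zr_hi Z_lo _; rewrite /g /eta; lra.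
  have left_le : expR (- (d * (eps - rho) * N%:R)) * tilted_sum (x - d) N
      <= expR (- (g * N%:R)) * tilted_sum x N.
    by apply: expR_rate_shift_le N0r Zl_hi Z_lo _; rewrite /g /eta; lra.
  have tail := tilted_sum_tail_le x rho eps d0 N0.
  rewrite ler_pdivrMr ?Z_pos // mul1r tilted_sum_window_le andbT.
  by rewrite ler_pdivlMr ?Z_pos // -expRM_natl mulrN (mulrC _ g); lra.
apply: (squeeze_cvgr ratio_bounds); last exact: cvg_cst.
have q_lt1 : `|expR (- g)| < 1 by rewrite gtr0_norm ?expR_gt0 // expR_lt1 oppr_lt0.
have : (fun N => 1 - 2 * expR (- g) ^+ N) @ \oo --> (1 - 2 * 0 : R).
  by apply: cvgB; [exact: cvg_cst | apply: cvgM; [exact: cvg_cst | exact: cvg_expr]].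
by rewrite mulr0 subr0.
Unshelve. all: end_near.
Qed.

End TiltedSums.

Section RenewalProb.
Variables (R : realType) (K : nat -> R).

Lemma renewal_prob_ge0 : (forall n, 0 <= K n) -> forall m N, 0 <= renewal_prob K m N.
Proof.
move=> K_ge0; elim=> [|m IH] N /=; first by case: (N == 0%N).
by apply: sumr_ge0 => k _; rewrite mulr_ge0.
Qed.

Hypotheses (K0 : K 0%N = 0) (K_gt0 : forall n, (0 < n)%N -> 0 < K n).

Lemma renewal_law_ge0 n : 0 <= K n.
Proof. by case: n => [|n]; rewrite ?K0 // ltW ?K_gt0. Qed.

Lemma renewal_prob_gt0 m N : (1 <= m <= N)%N -> 0 < renewal_prob K m N.
Proof.
elim: m N => [//|m IH] N /andP[_ mN] /=.
have term_ge0 (k : 'I_N.+1) : 0 <= K k * renewal_prob K m (N - k).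
  by rewrite mulr_ge0 ?renewal_law_ge0 ?(renewal_prob_ge0 renewal_law_ge0).
case: m IH mN term_ge0 => [|m] IH mN term_ge0.
  apply: (psumr_gt0 (i := ord_max)) => //; first exact: mem_index_enum.
  by rewrite /= subnn mulr1 K_gt0.
have one_lt : (1 < N.+1)%N by rewrite ltnS; lia.
apply: (psumr_gt0 (i := Ordinal one_lt)) => //; first exact: mem_index_enum.
by rewrite /= mulr_gt0 ?K_gt0 // IH //; lia.
Qed.

End RenewalProb.

Section RenewalWeight.
Variables (R : realType) (K : nat -> R) (Q : nat -> nat -> R) (H : R -> \bar R).

Definition renewal_weight (m N : nat) : R := Psi Q H m N * renewal_prob K m N.

Lemma ZPsi_tilted : ZPsi K Q H = tilted_sum renewal_weight.
Proof.
apply: funext => x; apply: funext => N; rewrite /ZPsi /tilted_sum.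
by apply: eq_bigr => m _; rewrite -mulrA.
Qed.

Lemma ZPsi_eps_tilted : ZPsi_eps K Q H = tilted_sum_window renewal_weight.
Proof.
apply: funext => x; apply: funext => rho; apply: funext => eps; apply: funext => N.
rewrite /ZPsi_eps /tilted_sum_window.
by apply: eq_bigr => m _; rewrite -mulrA.
Qed.

Hypotheses (K0 : K 0%N = 0) (K_gt0 : forall n, (0 < n)%N -> 0 < K n).
Hypothesis Q_ge0 : forall m N, 0 <= Q m N.

Lemma renewal_weight_ge0 m N : 0 <= renewal_weight m N.
Proof.
rewrite !mulr_ge0 ?renewal_prob_ge0 //; last exact: renewal_law_ge0.
by case: (H _) => [r| |] /=; rewrite ?expR_ge0.
Qed.

Hypothesis Q_lower : forall u v b : R, 0 < u -> u < v -> v < 1 -> 0 < b ->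
  exists c : R, 0 < c /\ forall m N : nat, (1 <= m <= N)%N ->
    (u <= m%:R / N%:R <= v)%R -> c * expR (- (b * N%:R)) <= Q m N.
Hypothesis H_fin : forall x : R, 0 < x < 1 -> H x \is a fin_num.

Lemma renewal_weight_half_gt0 N : (2 <= N)%N -> 0 < renewal_weight N./2 N.
Proof.
move=> N2; have half_range : (1 <= N./2 <= N)%N by lia.
have /andP[lo hi] := half_ratio_bounds R N2.
have [c [c0 Q_ge]] := @Q_lower (1 / 4) (3 / 4) 1 ltac:(lra) ltac:(lra) ltac:(lra) ltac:(lra).
rewrite /renewal_weight /Psi mulr_gt0 ?renewal_prob_gt0 //.
have Q_gt0 : 0 < Q N./2 N.
  by apply: lt_le_trans (Q_ge _ _ half_range _); rewrite ?lo ?hi ?mulr_gt0 ?expR_gt0.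
have : H ((N./2)%:R / N%:R) \is a fin_num by apply: H_fin; apply/andP; split; lra.
by case: (H _) => [r| |] //= _; rewrite mulr_gt0 ?expR_gt0.
Qed.

Lemma tilted_sum_renewal_weight_gt0 x N :
  (2 <= N)%N -> 0 < tilted_sum renewal_weight x N.
Proof.
move=> N2; apply: (tilted_sum_gt0 renewal_weight_ge0 x _ (renewal_weight_half_gt0 N2)).
lia.
Qed.

End RenewalWeight.

Theorem lemma4p2 (R : realType)
  (* renewal law *)
  (K : nat -> R) (alpha CK : R)
  (HK0 : K 0%N = 0)
  (HKpos : forall n, (0 < n)%N -> 0 < K n)
  (HKsum : (fun n => \sum_(k < n) K k) @ \oo --> (1 : R))
  (Halpha : 0 < alpha) (HCK : 0 < CK)
  (HKasym : (fun n : nat => K n / (CK * n%:R `^ (- (1 + alpha)))) @ \oo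
              --> (1 : R))
  (* H : [0,1] -> R u {-oo} *)
  (H : R -> \bar R)
  (HnotPinf : forall x : R, (0 <= x <= 1)%R -> H x != +oo%E)
  (Hfin : forall x : R, (0 < x < 1)%R -> H x \is a fin_num)
  (Hconc : forall x y t : R, (0 <= x <= 1)%R -> (0 <= y <= 1)%R -> (0 <= t <= 1)%R ->
     (t%:E * H x + ((1 - t)%R)%:E * H y <= H (t * x + (1 - t) * y)%R)%E)
  (Hanal : real_analytic_on `]0, 1[ (fine \o H))
  (Hcont : {within `[0, 1], continuous H})
  (* Q *)
  (Q : nat -> nat -> R)
  (HQ0 : forall m N, 0 <= Q m N)
  (HQup : forall b : R, 0 < b -> exists c : R, 0 < c /\
     forall m N : nat, (m <= N)%N -> Q m N <= c * expR (b * N%:R))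
  (HQlow : forall u v b : R, 0 < u -> u < v -> v < 1 -> 0 < b ->
     exists c : R, 0 < c /\ forall m N : nat, (1 <= m <= N)%N ->
       (u <= m%:R / N%:R <= v)%R -> c * expR (- (b * N%:R)) <= Q m N)
  (* free energy f_H and rho_h := f_H'(h) *)
  (fH : R -> R)
  (HfH : forall h', (fun N : nat => ln (ZPsi K Q H h' N) / N%:R) @ \oo --> fH h')
  (h : R)
  (* h <> h_c^H := - H'(0), H'(0) := lim_{x -> 0+} H'(x) (in R u {+oo}) *)
  (Hhc : ~ ((fun x : R => (derive1 (fine \o H) x)%:E) @ 0^'+ --> ((- h)%:E : \bar R)))
  (rho : R) (Hrho : is_derive h 1 fH rho)
  (eps : R) (Heps : 0 < eps) :
  (fun N : nat => ZPsi_eps K Q H h rho eps N / ZPsi K Q H h N) @ \oo --> (1 : R).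
Proof.
have w_ge0 := renewal_weight_ge0 H HK0 HKpos HQ0.
have Z_gt0 : \forall N \near \oo, forall y, 0 < tilted_sum (renewal_weight K Q H) y N.
  near=> N => y; apply: tilted_sum_renewal_weight_gt0 => //.
  by near: N; exists 2%N.
rewrite ZPsi_eps_tilted ZPsi_tilted; rewrite ZPsi_tilted in HfH.
exact (tilted_sum_window_ratio_cvg w_ge0 Z_gt0 HfH Hrho Heps).
Unshelve. all: end_near.
Qed.
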